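(* Let $n,d,k,V$ be positive integers, where $n$ is the maximum sentence length, videos live in $\mathbb{R}^d$, and $V$ is the vocabulary size. Let $\mathcal{U}=\{u_1,\dots,u_V\}$ with each word embedding $u_i\in\mathbb{R}^k$, and let $\delta_{\min}=\min_{i,j\in[V],\,i\neq j}\|u_i-u_j\|_2$. Let $f:\mathbb{R}^{nk}\to\mathbb{R}^d$ be any map (the text-to-video generation model), viewed as a map from the discrete sentence space $\{u_1,\dots,u_V\}^n\subset\mathbb{R}^{nk}$ to $\mathbb{R}^d$. Let $M:=\max_x\|f(x)\|_2$ and $m:=\min_x\|f(x)\|_2$, where $x$ ranges over $\{u_1,\dots,u_V\}^n$, and let $\epsilon=\big((M^d-m^d)/V^n\big)^{1/d}$. Then there exists $y\in\mathbb{R}^d$ with $m\le\|y\|_2\le M$ such that for every sentence $x\in\{u_1,\dots,u_V\}^n$, $\|f(x)-y\|_2\ge\epsilon$.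
   Context: A sentence $x\in\{u_1,\dots,u_V\}^n$ is identified with the concatenation of its $n$ word embeddings, a vector in $\mathbb{R}^{nk}$. $[V]=\{1,\dots,V\}$. *)

From HB Require Import structures.
From mathcomp Require Import all_boot all_order all_algebra.
From mathcomp Require Import all_classical all_reals all_analysis.
Set Implicit Arguments. Unset Strict Implicit. Unset Printing Implicit Defensive.
Import Order.TTheory GRing.Theory Num.Theory.
Local Open Scope ring_scope.

Definition l2norm (R : realType) (d : nat) (v : 'rV[R]_d) : R :=
  Num.sqrt (\sum_(i < d) v ord0 i ^+ 2).

Definition sentence (n V : nat) := {ffun 'I_n -> 'I_V}.

(* The sentence as a vector in R^{nk}: concatenation of its n word
   embeddings (row-major vectorisation of the n x k matrix of embeddings). *)
Definition embed_sentence (R : realType) (n k V : nat)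
  (u : 'I_V -> 'rV[R]_k) (s : sentence n V) : 'rV[R]_(n * k) :=
  mxvec (\matrix_(i < n, j < k) u (s i) ord0 j).

(* minimum pairwise distance of the embeddings (delta_min in the paper;
   not used in the conclusion) *)
Definition delta_min (R : realType) (k V : nat) (u : 'I_V -> 'rV[R]_k) : R :=
  let top := \big[Order.max/0]_(i < V) \big[Order.max/0]_(j < V) l2norm (u i - u j) in
  \big[Order.min/top]_(i < V) \big[Order.min/top]_(j < V | j != i) l2norm (u i - u j).

(* M = max over sentences of ||f(x)||  (norms are >= 0, so 0 is a neutral start) *)
Definition Mmax (R : realType) (n k d V : nat)
  (u : 'I_V -> 'rV[R]_k) (f : 'rV[R]_(n * k) -> 'rV[R]_d) : R :=
  \big[Order.max/0]_(s : sentence n V) l2norm (f (embed_sentence u s)).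

(* m = min over sentences of ||f(x)||  (started at M, which is >= every term) *)
Definition mmin (R : realType) (n k d V : nat)
  (u : 'I_V -> 'rV[R]_k) (f : 'rV[R]_(n * k) -> 'rV[R]_d) : R :=
  \big[Order.min/Mmax u f]_(s : sentence n V) l2norm (f (embed_sentence u s)).

From HB Require Import structures.
From mathcomp Require Import all_boot all_order all_algebra.
From mathcomp Require Import all_classical all_reals all_analysis.
From mathcomp Require Import ring lra zify.
Set Implicit Arguments. Unset Strict Implicit. Unset Printing Implicit Defensive.
Import Order.TTheory GRing.Theory Num.Theory.
Import numFieldTopology.Exports.
Local Open Scope classical_set_scope.
Local Open Scope ring_scope.

(* If every point of the annulus [m <= |y| <= M] were within [eps] of one of
   the [N = V ^ n] points [f x], compactness would give closed balls of a
   radius [e' < eps] around these points covering the annulus; with the ball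
   of radius [m] they cover the ball of radius [M], and comparing volumes gives
   [M ^ d <= m ^ d + N e' ^ d < m ^ d + N eps ^ d = M ^ d].  Volume is replaced
   by the ball-covering content of the unit ball, the infimum of [sum r_i ^ d]
   over finite covers by balls of radii [r_i]: it scales like [r ^ d] and it is
   positive because a ball of radius [r] contains at most about [(4 d r K) ^ d]
   of [K ^ d] grid points of the unit ball. *)

Lemma card_ord_le_diam (K B : nat) (T : {pred 'I_K}) :
  {in T &, forall t t' : 'I_K, t <= t' + B}%N -> (#|T| <= B.*2.+1)%N.
Proof.
move=> diamT; have [->//|/card_gt0P [t0 t0T]] := posnP #|T|.
rewrite cardE -(size_map (@nat_of_ord K)) -[B.*2.+1](size_iota (t0 - B)).
apply: uniq_leq_size; first by rewrite map_inj_uniq ?enum_uniq //; exact: ord_inj.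
move=> x /mapP [t]; rewrite mem_enum => tT ->; rewrite mem_iota.
by have := diamT _ _ tT t0T; have := diamT _ _ t0T tT; rewrite -addnn; lia.
Qed.

Lemma card_le_sum_cover (T : finType) (I : eqType) (s : seq I) (A : I -> {pred T}) :
  (forall x : T, exists2 i, i \in s & x \in A i) -> (#|T| <= \sum_(i <- s) #|A i|)%N.
Proof.
move=> covT.
have -> : (\sum_(i <- s) #|A i| = \sum_(x : T) \sum_(i <- s) (x \in A i))%N.
  rewrite exchange_big; apply: eq_bigr => i _.
  by rewrite -sum1_card big_mkcond; apply: eq_bigr => x _; case: (x \in A i).
rewrite -sum1_card; apply: leq_sum => x _.
by have [i si xAi] := covT x; rewrite (big_rem i) //= xAi.
Qed.

Lemma card_family_le (I J : finType) (F : I -> {pred J}) (B : nat) :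
  (forall i, #|F i| <= B)%N -> (#|family F| <= B ^ #|I|)%N.
Proof.
move=> FB; rewrite card_family foldrE big_map -prod_nat_const big_enum /=.
by apply: leq_prod => i _; exact: FB.
Qed.

Section ArchimedeanBounds.
Variable R : archiRealFieldType.

Lemma leq_add_truncn (x y : nat) (L : R) :
  `|x%:R - y%:R| <= L -> (x <= y + Num.truncn L)%N.
Proof.
move=> xyL; have [xy|yx] := leqP x y; first exact: leq_trans xy (leq_addr _ _).
have L_ge0 : 0 <= L := le_trans (normr_ge0 _) xyL.
rewrite -leq_subLR truncn_ge_nat // natrB; last exact: ltnW.
exact: le_trans (ler_norm _) xyL.
Qed.

Lemma exprD_le_linear (x t : R) (n : nat) : 0 <= x -> 0 <= t <= 1 ->
  (x + t) ^+ n <= x ^+ n + t * (x + 2) ^+ n.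
Proof.
move=> x0 /andP[t0 t1]; elim: n => [|n IH]; first by rewrite !expr0; lra.
have X0 : 0 <= x ^+ n by exact: exprn_ge0.
have XC : x ^+ n <= (x + 2) ^+ n by apply: lerXn2r; rewrite ?nnegrE //; lra.
rewrite !exprS; apply: le_trans (ler_wpM2l _ IH) _; first lra.
move: X0 XC; set X := x ^+ n; set C := (x + 2) ^+ n => X0 XC.
have gap_ge0 : 0 <= t * (C - X) by apply: mulr_ge0; lra.
have slack_ge0 : 0 <= t * (1 - t) * C by apply: mulr_ge0 => //; [apply: mulr_ge0 | ]; lra.
nra.
Qed.

Lemma sum_exprn_ge1 (s : seq R) (n : nat) : all (>= 0) s ->
  (forall K : nat, (0 < K)%N -> K%:R ^+ n <= \sum_(x <- s) (x * K%:R + 1) ^+ n) ->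
  1 <= \sum_(x <- s) x ^+ n.
Proof.
move=> s_ge0 scaled_bound.
set C := \sum_(x <- s) (x + 2) ^+ n.
have C_ge0 : 0 <= C.
  by rewrite /C big_seq sumr_ge0 // => x /(allP s_ge0) /= x0; rewrite exprn_ge0 //; lra.
have bound_K K : (0 < K)%N -> 1 <= \sum_(x <- s) x ^+ n + K%:R^-1 * C.
  move=> K0; have Kp : 0 < K%:R :> R by rewrite ltr0n.
  have Ki : 0 < K%:R^-1 :> R by rewrite invr_gt0.
  have := scaled_bound K K0.
  rewrite -(ler_pM2r (exprn_gt0 n Ki)) -exprMn mulfV ?gt_eqF // expr1n.
  rewrite mulr_suml => /le_trans; apply.
  rewrite /C mulr_sumr -big_split /= !big_seq; apply: ler_sum => x /(allP s_ge0) x0.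
  rewrite -exprMn mulrDl -mulrA mulfV ?gt_eqF // mulr1 mul1r.
  by apply: exprD_le_linear; rewrite // invr_ge0 ltW //= invf_le1 // ler1n.
apply/ler_addgt0Pr => e e0.
pose K := Num.bound (C / e).
have Kp : 0 < K%:R :> R by rewrite ltr0n.
apply: le_trans (bound_K K isT) _; rewrite lerD2l mulrC ler_pdivrMr // mulrC.
by rewrite -ler_pdivrMr // ltW // archi_boundP // divr_ge0 // ltW.
Qed.

End ArchimedeanBounds.

Lemma continuous_bigmin (R : realType) (T : topologicalType) (I : Type) (r : seq I)
    (e : R) (F : I -> T -> R) :
  (forall i, continuous (F i)) -> continuous (fun x => \big[Order.min/e]_(i <- r) F i x).
Proof.
move=> F_cont; elim: r => [|i r IH].
  have -> : (fun x => \big[Order.min/e]_(i <- [::]) F i x) = fun=> e.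
    by apply: funext => x; rewrite big_nil.
  exact: cst_continuous.
have -> : (fun x => \big[Order.min/e]_(j <- i :: r) F j x) =
    (F i) \min (fun x => \big[Order.min/e]_(j <- r) F j x).
  by apply: funext => x; rewrite big_cons.
by move=> x; exact: continuous_min (F_cont i x) (IH x).
Qed.

Section L2Norm.
Variables (R : realType) (d : nat).
Implicit Types (v w : 'rV[R]_d).

Lemma l2norm_ge0 v : 0 <= l2norm v.
Proof. exact: sqrtr_ge0. Qed.

Lemma l2normZ (a : R) v : l2norm (a *: v) = `|a| * l2norm v.
Proof.
rewrite /l2norm (eq_bigr (fun i => a ^+ 2 * v ord0 i ^+ 2)); last first.
  by move=> i _; rewrite mxE exprMn.
by rewrite -mulr_sumr sqrtrM ?sqr_ge0 // sqrtr_sqr.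
Qed.

Lemma l2normN v : l2norm (- v) = l2norm v.
Proof. by rewrite -scaleN1r l2normZ normrN normr1 mul1r. Qed.

Lemma l2normB v w : l2norm (v - w) = l2norm (w - v).
Proof. by rewrite -l2normN opprB. Qed.

Lemma l2norm_delta (j : 'I_d) : l2norm (delta_mx 0 j : 'rV[R]_d) = 1.
Proof.
rewrite /l2norm (bigD1 j) //= big1 => [|i /negbTE ij].
  by rewrite mxE !eqxx expr1n addr0 sqrtr1.
by rewrite mxE ij andbF expr0n.
Qed.

Lemma normr_coord_le_l2norm v j : `|v ord0 j| <= l2norm v.
Proof.
rewrite /l2norm -sqrtr_sqr ler_sqrt; last by apply: sumr_ge0 => i _; exact: sqr_ge0.
rewrite (bigD1 j) //= lerDl; apply: sumr_ge0 => i _; exact: sqr_ge0.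
Qed.

Lemma l2norm_le1 v : (0 < d)%N -> (forall j, `|v ord0 j| <= d%:R^-1) -> l2norm v <= 1.
Proof.
move=> d_gt0 small_v; rewrite /l2norm -sqrtr1 ler_sqrt ?ler01 //.
have d_pos : 0 < d%:R :> R by rewrite ltr0n.
apply: le_trans (_ : \sum_(i < d) (d%:R^-1) ^+ 2 <= 1).
  apply: ler_sum => i _; rewrite -real_normK ?num_real //.
  by apply: lerXn2r; rewrite ?nnegrE ?normr_ge0 ?invr_ge0 ?ler0n.
have -> : \sum_(i < d) (d%:R^-1) ^+ 2 = d%:R^-1 :> R.
  by rewrite sumr_const card_ord -mulr_natr; field; rewrite gt_eqF.
by rewrite invf_le1 // ler1n.
Qed.

Lemma l2norm_continuous : continuous (fun v : 'rV[R]_d => l2norm v).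
Proof.
move=> v; apply: continuous_comp (@sqrt_continuous R _).
apply: (@continuous_big R 'I_d +%R 0 xpredT add_continuous _ _
  (fun i (y : 'rV[R]_d) => y ord0 i ^+ 2)) => i _ w.
apply: (@continuous_comp _ _ _ (fun y : 'rV[R]_d => y ord0 i) (fun x : R => x ^+ 2)).
  exact: coord_continuous.
exact: exprn_continuous.
Qed.

Definition annulus (m M : R) : set 'rV[R]_d := [set y | m <= l2norm y <= M].

Lemma compact_annulus (m M : R) : compact (annulus m M).
Proof.
have annulusE : annulus m M =
    (fun y => l2norm y) @^-1` [set x | m <= x] `&`
     (fun y => l2norm y) @^-1` [set x | x <= M].
  by apply/seteqP; split => y /=; [move/andP | move=> [? ?]; apply/andP].
apply: bounded_closed_compact.
  exists M; split; first exact: num_real.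
  move=> x Mx y /andP[_ yM] /=; rewrite /Num.norm /= mx_normrE.
  apply: bigmax_le => [|ij _].
    by rewrite ltW // (le_lt_trans _ Mx) // (le_trans (l2norm_ge0 y)).
  rewrite (ord1 ij.1) ltW // (le_lt_trans _ Mx) //.
  exact: le_trans (normr_coord_le_l2norm y ij.2) yM.
rewrite annulusE; apply: closedI; apply: preimage_closed;
  by [move=> x _; exact: l2norm_continuous | exact: closed_ge | exact: closed_le].
Qed.

Lemma annulus_neq0 (m M : R) : (0 < d)%N -> 0 <= m <= M -> annulus m M !=set0.
Proof.
move=> d_gt0 /andP[m_ge0 mM]; exists (m *: delta_mx 0 (Ordinal d_gt0)).
by rewrite /annulus /= l2normZ l2norm_delta mulr1 ger0_norm // lexx.
Qed.

Section DistanceToPoints.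
Variables (I : finType) (p : I -> 'rV[R]_d).

Lemma annulus_cover_shrink (m M e : R) : annulus m M !=set0 ->
    (forall y, annulus m M y -> exists i, l2norm (p i - y) < e) ->
  exists2 e', e' < e & forall y, annulus m M y -> exists i, l2norm (p i - y) <= e'.
Proof.
move=> A_neq0 cov.
pose dist y := \big[Order.min/e]_i l2norm (p i - y).
have dist_continuous : continuous dist.
  apply: continuous_bigmin => i y.
  apply: (@continuous_comp _ _ _ (fun y : 'rV[R]_d => p i - y) (fun v => l2norm v)).
    by apply: continuousB; first exact: cst_continuous.
  exact: l2norm_continuous.
have [c /set_mem c_A c_max] := EVT_max_rV A_neq0 (@compact_annulus m M)
  (continuous_subspaceT dist_continuous).
have dist_c_lt : dist c < e.
  by have [i ci] := cov c c_A; apply: le_lt_trans ci; exact: bigmin_le.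
exists (dist c) => // y y_A.
have [//|none] := pselect (exists i, l2norm (p i - y) <= dist c).
have : dist c < dist y.
  apply/bigmin_gtP; split => // i _; rewrite ltNge; apply/negP => yi.
  by apply: none; exists i.
by rewrite ltNge c_max // mem_set.
Qed.

End DistanceToPoints.

End L2Norm.

Section BallCovers.
Variables (R : realType) (d : nat).
Local Notation vec := 'rV[R]_d.

Definition l2ball (c : vec) (r : R) : set vec := [set y | l2norm (y - c) <= r].

Definition ball_cover (s : seq (vec * R)) (S : set vec) :=
  forall y, S y -> exists2 b, b \in s & l2ball b.1 b.2 y.

Definition cover_weight (s : seq (vec * R)) : R := \sum_(b <- s) `|b.2| ^+ d.

Definition cover_weights : set R :=
  [set cover_weight s | s in [set s | ball_cover s (l2ball 0 1)]].

Definition cover_content : R := inf cover_weights.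

Lemma cover_weight_ge0 s : 0 <= cover_weight s.
Proof. by apply: sumr_ge0 => b _; exact: exprn_ge0. Qed.

Lemma has_inf_cover_weights : has_inf cover_weights.
Proof.
split; last by exists 0 => _ [s _ <-]; exact: cover_weight_ge0.
exists (cover_weight [:: (0, 1)]); exists [:: (0, 1)] => // y y_in.
by exists (0, 1); first exact: mem_head.
Qed.

Lemma cover_content_le s : ball_cover s (l2ball 0 1) -> cover_content <= cover_weight s.
Proof. by move=> s_cov; apply: (ge_inf has_inf_cover_weights.2); exists s. Qed.

Lemma cover_content_ge0 : 0 <= cover_content.
Proof.
apply: lb_le_inf; first by case: has_inf_cover_weights.
by move=> _ [s _ <-]; exact: cover_weight_ge0.
Qed.

Definition cover_affine (c : vec) (a : R) (s : seq (vec * R)) :=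
  [seq (c + a *: b.1, a * b.2) | b <- s].

Lemma ball_cover_affine c a q r s : 0 < a -> ball_cover s (l2ball q r) ->
  ball_cover (cover_affine c a s) (l2ball (c + a *: q) (a * r)).
Proof.
move=> a_gt0 s_cov y; have a_neq0 : a != 0 by rewrite gt_eqF.
have -> : y = c + a *: (a^-1 *: (y - c)) by rewrite scalerA mulfV // scale1r addrC subrK.
set z := a^-1 *: (y - c); clearbody z.
have shiftE x : c + a *: z - (c + a *: x) = a *: (z - x).
  by rewrite opprD addrACA subrr add0r scalerBr.
rewrite /l2ball /= shiftE l2normZ gtr0_norm // ler_pM2l // => z_in.
have [b b_s b_z] := s_cov z z_in.
exists (c + a *: b.1, a * b.2); first exact: map_f.
by rewrite /l2ball /= shiftE l2normZ gtr0_norm // ler_pM2l.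
Qed.

Lemma cover_weight_affine c a s : 0 <= a ->
  cover_weight (cover_affine c a s) = a ^+ d * cover_weight s.
Proof.
move=> a_ge0; rewrite /cover_weight big_map mulr_sumr.
by apply: eq_bigr => b _; rewrite /= normrM exprMn ger0_norm.
Qed.

Lemma cover_content_scale_le c r s : 0 < r ->
  ball_cover s (l2ball c r) -> cover_content * r ^+ d <= cover_weight s.
Proof.
move=> r_gt0 s_cov; have r_neq0 : r != 0 by rewrite gt_eqF.
have ri_gt0 : 0 < r^-1 by rewrite invr_gt0.
have unit_cov : ball_cover (cover_affine (- (r^-1 *: c)) r^-1 s) (l2ball 0 1).
  have := ball_cover_affine (c := - (r^-1 *: c)) ri_gt0 s_cov.
  by rewrite addNr mulVf.
rewrite -(ler_pM2l (exprn_gt0 d ri_gt0)) mulrCA -exprMn mulVf // expr1n mulr1.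
rewrite -(cover_weight_affine (- (r^-1 *: c)) s (ltW ri_gt0)).
exact: cover_content_le.
Qed.

Hypothesis d_gt0 : (0 < d)%N.

Lemma ball_cover_near_content c r delta : 0 < delta ->
  exists2 s, ball_cover s (l2ball c r) &
    cover_weight s <= (cover_content + delta) * `|r| ^+ d.
Proof.
move=> delta_gt0; have [r_le0|r_gt0] := leP r 0.
  exists [:: (c, 0)].
    by move=> y y_in; exists (c, 0); rewrite ?mem_seq1 // /l2ball /= (le_trans y_in).
  rewrite /cover_weight big_seq1 normr0 expr0n gtn_eqF // mulr_ge0 ?exprn_ge0 //.
  by rewrite addr_ge0 ?cover_content_ge0 ?ltW.
have [_ [s0 s0_cov <-] s0_lt] := inf_adherent delta_gt0 has_inf_cover_weights.
exists (cover_affine c r s0).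
  by have := ball_cover_affine (c := c) r_gt0 s0_cov; rewrite scaler0 addr0 mulr1.
rewrite cover_weight_affine; last exact: ltW.
by rewrite gtr0_norm // mulrC ler_wpM2r ?exprn_ge0 // ltW.
Qed.

Definition grid (K : nat) (k : {ffun 'I_d -> 'I_K}) : vec :=
  \row_j ((k j : nat)%:R / (d * K)%:R).

Lemma grid_in_unit_ball K k : l2ball 0 1 (@grid K k).
Proof.
rewrite /l2ball /= subr0; apply: l2norm_le1 => // j.
have K_gt0 : (0 < K)%N by apply: leq_ltn_trans (ltn_ord (k j)).
rewrite mxE ger0_norm ?divr_ge0 // natrM invfM mulrCA ler_piMr ?invr_ge0 //.
by rewrite ler_pdivrMr ?ltr0n // mul1r ler_nat ltnW.
Qed.

Lemma card_grid_in_ball K c r : (0 < K)%N ->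
  (#|[pred k | (l2norm (@grid K k - c) <= r)%R]| <=
     (Num.truncn (2 * `|r| * (d * K)%:R)).*2.+1 ^ d)%N.
Proof.
move=> K_gt0; have dK_gt0 : 0 < (d * K)%:R :> R by rewrite ltr0n muln_gt0 d_gt0.
pose near_c j := [pred t : 'I_K | `|(t : nat)%:R / (d * K)%:R - c ord0 j| <= `|r|].
apply: (@leq_trans #|family near_c|).
  apply: subset_leq_card; apply/fintype.subsetP => k; rewrite !inE => k_in.
  apply/familyP => j; rewrite inE; apply: le_trans (ler_norm r).
  by apply: le_trans k_in; have := normr_coord_le_l2norm (grid k - c) j; rewrite !mxE.
rewrite -[X in (_ <= _ ^ X)%N](card_ord d); apply: card_family_le => j.
apply: card_ord_le_diam => t t'; rewrite !inE => t_c t'_c; apply: leq_add_truncn.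
have -> : (t : nat)%:R - (t' : nat)%:R =
    ((t : nat)%:R / (d * K)%:R - c ord0 j - ((t' : nat)%:R / (d * K)%:R - c ord0 j))
    * (d * K)%:R :> R.
  by field; rewrite !pnatr_eq0 -!lt0n K_gt0 d_gt0.
rewrite normrM (gtr0_norm dK_gt0) ler_pM2r // mulr2n mulrDl mul1r.
exact: le_trans (ler_normB _ _) (lerD t_c t'_c).
Qed.

Lemma grid_count_ball_cover K s : (0 < K)%N -> ball_cover s (l2ball 0 1) ->
  K%:R ^+ d <= \sum_(b <- s) (4 * d%:R * `|b.2| * K%:R + 1) ^+ d.
Proof.
move=> K_gt0 s_cov.
have count : (K ^ d <= \sum_(b <- s) (Num.truncn (2 * `|b.2| * (d * K)%:R)).*2.+1 ^ d)%N.
  rewrite -[X in (X ^ _ <= _)%N](card_ord K) -[X in (_ ^ X <= _)%N](card_ord d).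
  rewrite -card_ffun.
  pose in_ball b := [pred k | l2norm (@grid K k - b.1) <= b.2].
  apply: leq_trans (card_le_sum_cover (s := s) (A := in_ball) _) _.
    by move=> k; have [b b_s b_k] := s_cov _ (grid_in_unit_ball k); exists b.
  by apply: leq_sum => b _; exact: card_grid_in_ball.
rewrite -(ler_nat R) natrX natr_sum in count; apply: (le_trans count).
apply: ler_sum => b _; rewrite natrX lerXn2r ?nnegrE ?ler0n ?addr_ge0 ?mulr_ge0 //.
rewrite -addn1 -muln2 natrD natrM lerD2r.
have := truncn_le (2 * `|b.2| * (d * K)%:R); rewrite !mulr_ge0 ?ler0n // natrM.
by move=> trunc_le; lra.
Qed.

Lemma cover_weight_ge_grid s : ball_cover s (l2ball 0 1) ->
  ((4 * d%:R) ^+ d)^-1 <= cover_weight s.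
Proof.
move=> s_cov.
have c_gt0 : 0 < (4 * d%:R) ^+ d :> R by rewrite exprn_gt0 // mulr_gt0 ?ltr0n.
rewrite -[_^-1]mul1r ler_pdivrMr // /cover_weight mulr_suml.
under eq_bigr do rewrite -exprMn mulrC.
have := @sum_exprn_ge1 R [seq 4 * d%:R * `|b.2| | b <- s] d; rewrite !big_map; apply.
  by apply/allP => _ /mapP [b _ ->]; rewrite /= !mulr_ge0 ?ler0n.
by move=> K K_gt0; rewrite big_map; exact: grid_count_ball_cover.
Qed.

Lemma cover_content_gt0 : 0 < cover_content.
Proof.
have c_gt0 : 0 < ((4 * d%:R) ^+ d)^-1 :> R.
  by rewrite invr_gt0 exprn_gt0 // mulr_gt0 ?ltr0n.
apply: lt_le_trans c_gt0 _; apply: lb_le_inf; first by case: has_inf_cover_weights.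
by move=> _ [s s_cov <-]; exact: cover_weight_ge_grid.
Qed.

Lemma ball_cover_weight_ge c r s : 0 <= r ->
  ball_cover s (l2ball c r) -> r ^+ d <= cover_weight s.
Proof.
rewrite le_eqVlt => /predU1P[<- _|r_gt0 s_cov].
  by rewrite expr0n gtn_eqF // cover_weight_ge0.
have near_content delta : 0 < delta ->
    cover_content * r ^+ d <= (cover_content + delta) * cover_weight s.
  move=> delta_gt0.
  have near_cover b : exists sb, ball_cover sb (l2ball b.1 b.2) /\
      cover_weight sb <= (cover_content + delta) * `|b.2| ^+ d.
    by have [sb ? ?] := ball_cover_near_content b.1 b.2 delta_gt0; exists sb.
  have [F F_cov] := choice near_cover.
  have all_cov : ball_cover (flatten [seq F b | b <- s]) (l2ball c r).
    move=> y /s_cov [b b_s /(proj1 (F_cov b)) [b' b'_Fb b'_y]].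
    by exists b' => //; apply/flatten_mapP; exists b.
  apply: le_trans (cover_content_scale_le r_gt0 all_cov) _.
  rewrite {1}/cover_weight big_flatten big_map /cover_weight mulr_sumr.
  by apply: ler_sum => b _; exact: (F_cov b).2.
rewrite -(ler_pM2l cover_content_gt0); apply/ler_addgt0Pr => e e_gt0.
have W_gt0 : 0 < cover_weight s + 1 by rewrite ltr_wpDl ?cover_weight_ge0.
apply: le_trans (near_content _ (divr_gt0 e_gt0 W_gt0)) _.
by rewrite mulrDl lerD2l mulrAC ler_pdivrMr // ler_pM2l // lerDl ler01.
Qed.

End BallCovers.

Lemma exists_annulus_point_far (R : realType) (d : nat) (I : finType)
    (p : I -> 'rV[R]_d) (m M eps : R) :
  (0 < d)%N -> 0 <= m <= M -> 0 <= eps -> #|I|%:R * eps ^+ d = M ^+ d - m ^+ d ->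
  exists2 y, m <= l2norm y <= M & forall i, eps <= l2norm (p i - y).
Proof.
move=> d_gt0 mM_bounds eps_ge0 volume; have /andP[m_ge0 mM] := mM_bounds.
have A_neq0 := annulus_neq0 d_gt0 mM_bounds.
apply: contrapT => no_far.
have near_p y : annulus m M y -> exists i, l2norm (p i - y) < eps.
  move=> y_A; apply: contrapT => no_near; apply: no_far; exists y => // i.
  by rewrite leNgt; apply/negP => y_near; apply: no_near; exists i.
have [e' e'_lt near_p'] := annulus_cover_shrink A_neq0 near_p.
have [y0 /near_p' [i0 y0_near]] := A_neq0.
have e'_ge0 : 0 <= e' := le_trans (l2norm_ge0 _) y0_near.
have I_gt0 : (0 < #|I|)%N by apply/card_gt0P; exists i0.
have M_cov : ball_cover ((0, m) :: [seq (p i, e') | i <- enum I]) (l2ball 0 M).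
  move=> y; rewrite /l2ball /= subr0 => yM.
  have [ym|my] := ltP (l2norm y) m.
    by exists (0, m); rewrite ?mem_head // /l2ball /= subr0 ltW.
  have /near_p' [i y_near] : annulus m M y by apply/andP.
  exists (p i, e'); first by rewrite in_cons map_f ?orbT ?mem_enum.
  by rewrite /l2ball /= l2normB.
have := ball_cover_weight_ge d_gt0 (le_trans m_ge0 mM) M_cov.
rewrite /cover_weight big_cons big_map big_enum /= sumr_const !ger0_norm //.
have : e' ^+ d < eps ^+ d by rewrite ltrXn2r ?gtn_eqF.
have : 0 < #|I|%:R :> R by rewrite ltr0n.
nra.
Qed.

Theorem theorem5p9 (R : realType) (n d k V : nat)
  (hn : (0 < n)%N) (hd : (0 < d)%N) (hk : (0 < k)%N) (hV : (0 < V)%N)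
  (u : 'I_V -> 'rV[R]_k) (f : 'rV[R]_(n * k) -> 'rV[R]_d) :
  let M := Mmax u f in
  let m := mmin u f in
  let eps := ((M ^+ d - m ^+ d) / (V ^ n)%:R) `^ (d%:R^-1) in
  exists y : 'rV[R]_d,
    m <= l2norm y <= M /\
    forall s : sentence n V, eps <= l2norm (f (embed_sentence u s) - y).
Proof.
move=> M m eps.
have M_ge0 : 0 <= M by apply: bigmax_ge_id.
have m_ge0 : 0 <= m by apply/bigmin_geP; split=> // s _; exact: l2norm_ge0.
have mM : m <= M by apply: bigmin_le_id.
have Vn_gt0 : 0 < (V ^ n)%:R :> R by rewrite ltr0n expn_gt0 hV.
have ratio_ge0 : 0 <= (M ^+ d - m ^+ d) / (V ^ n)%:R.
  by rewrite divr_ge0 ?ler0n // subr_ge0 lerXn2r // ?nnegrE.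
have volume : #|sentence n V|%:R * eps ^+ d = M ^+ d - m ^+ d.
  rewrite card_ffun !card_ord /eps -powR_mulrn ?powR_ge0 // -powRrM mulVf.
    by rewrite powRr1 // mulrC -mulrA mulVf ?gt_eqF // mulr1.
  by rewrite pnatr_eq0 -lt0n.
have mM_bounds : 0 <= m <= M by rewrite m_ge0.
have [y ym far] := exists_annulus_point_far (fun s => f (embed_sentence u s)) hd
  mM_bounds (powR_ge0 _ _) volume.
by exists y.
Qed.
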